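(* Let $d\geq 2$ and $n$ be positive integers, $t\in\{1,d-1\}$, and $n\equiv t\pmod d$ (so $tn\equiv 1\pmod d$). Then, modulo $(1-aq^{tn})(a-q^{tn})(b-q^{tn})$, \[ \sum_{k=0}^{(tn-1)/d}\frac{(aq;q^d)_k(q/a;q^d)_k(q/b;q^d)_k}{(q^d;q^d)_k(c;q^d)_k(q^{d+3}/bc;q^d)_k}q^{dk} \equiv\frac{(1-aq^{tn})(a-q^{tn})}{(a-b)(1-ab)}\frac{(c/aq;q^d)_{m}(ac/q;q^d)_{m}}{(c;q^d)_{m}(c/q^2;q^d)_{m}} +\frac{(b-q^{tn})(ab-1-a^2+aq^{tn})}{(a-b)(1-ab)}\frac{(q/b)^{m}(bc/q;q^d)_{m}(q^{d+2}/c;q^d)_{m}}{(c;q^d)_{m}(q^{d+3}/bc;q^d)_{m}}, \] where $m=(tn-1)/d$.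
   Context: For complex $x$ and $q$, $(x;q)_0=1$ and $(x;q)_m=(1-x)(1-xq)\cdots(1-xq^{m-1})$ for positive integers $m$. Here $a,b,c,q$ are indeterminates and both sides are rational functions in them; the congruence $A\equiv B$ modulo $P=(1-aq^{tn})(a-q^{tn})(b-q^{tn})$ means that $A-B=P\cdot R$ for a rational function $R$ whose denominator is coprime to each of the factors $1-aq^{tn}$, $a-q^{tn}$, $b-q^{tn}$. *)

From HB Require Import structures.
From mathcomp Require Import all_boot all_order all_algebra.
From mathcomp Require Import fraction.
From mathcomp.multinomials Require Import mpoly.
Set Implicit Arguments. Unset Strict Implicit. Unset Printing Implicit Defensive.
Import Order.TTheory GRing.Theory Num.Theory.
Local Open Scope ring_scope.

Definition Poly : idomainType := {mpoly rat[4]}.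
Definition RF : fieldType := {fraction Poly}.
Definition toRF (p : Poly) : RF := @FracField.tofrac Poly p.
Notation "x %:F" := (toRF x) : ring_scope.

Definition Xa : Poly := 'X_(@inord 3 0).
Definition Xb : Poly := 'X_(@inord 3 1).
Definition Xc : Poly := 'X_(@inord 3 2).
Definition Xq : Poly := 'X_(@inord 3 3).

Definition fa : RF := Xa%:F.
Definition fb : RF := Xb%:F.
Definition fc : RF := Xc%:F.
Definition fq : RF := Xq%:F.

Definition qpoch (R : comNzRingType) (x p : R) (k : nat) : R :=
  \prod_(i < k) (1 - x * p ^+ i).

Definition pdvd (f g : Poly) : Prop := exists h : Poly, g = f * h.
Definition pcoprime (f g : Poly) : Prop :=
  forall h : Poly, pdvd h f -> pdvd h g -> h \is a GRing.unit.

(* A = B modulo P = f1*f2*f3: A - B = P * R with R = N/D, D coprime to each fi *)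
Definition cong3 (A B : RF) (f1 f2 f3 : Poly) : Prop :=
  exists N D : Poly, [/\ D != 0, pcoprime D f1, pcoprime D f2, pcoprime D f3 &
    A - B = (f1 * f2 * f3)%:F * (N%:F / D%:F)].

From Pilot Require Import Defs.
From HB Require Import structures.
From mathcomp Require Import all_boot all_order all_algebra.
From mathcomp Require Import fraction.
From mathcomp.multinomials Require Import mpoly.
From mathcomp Require Import ring zify.
Import GRing.Theory.
Local Open Scope ring_scope.

(* Let S = LHS - RHS, a rational function in a, b, c, q.  The proof shows
   that S vanishes under each of the specialisations a = q^-e, a = q^e and
   b = q^e, and that this forces the congruence.
   - Over an arbitrary field, the q-Pfaff-Saalschutz summation is proved by a
     telescoping induction.  At each specialisation one factor (aq;p)_k,
     (q/a;p)_k or (q/b;p)_k starts at p^-m, the sum becomes a terminating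
     Saalschutz sum, and its value is the right-hand side.
   - Polynomial side: the kernel of the substitution X_j |-> g (resp. 1/g) is
     generated by X_j - g (resp. 1 - X_j g), and "u specialises to v1, v2, v3"
     (u = N/D with E_i D <> 0 and v_i = E_i N / E_i D) is stable under the
     field operations.  Hence S = N/D where N is killed by the three
     substitutions, so divisible by the three factors, and D is coprime to
     each of them.
   - All the denominators involved are nonzero because distinct monomials in
     a, b, c, q are distinct rational functions. *)

Section QPochhammer.
Variable F : fieldType.
Implicit Types (x p : F).

Lemma qpoch0 x p : qpoch x p 0 = 1.
Proof. by rewrite /qpoch big_ord0. Qed.

Lemma qpochS x p k : qpoch x p k.+1 = qpoch x p k * (1 - x * p ^+ k).
Proof. by rewrite /qpoch big_ord_recr. Qed.

Lemma qpochSl x p k : qpoch x p k.+1 = (1 - x) * qpoch (x * p) p k.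
Proof.
rewrite /qpoch big_ord_recl expr0 mulr1; congr (_ * _).
by apply: eq_bigr => i _; rewrite lift0 exprS mulrA.
Qed.

Lemma qpoch_shift x p k : 1 - x != 0 ->
  qpoch (x * p) p k = qpoch x p k * (1 - x * p ^+ k) / (1 - x).
Proof. by move=> hx; rewrite -qpochS qpochSl; field. Qed.

Lemma qpoch_neq0 x p k : (forall i, (i < k)%N -> 1 - x * p ^+ i != 0) ->
  qpoch x p k != 0.
Proof. by move=> H; apply/prodf_neq0 => i _; exact: H. Qed.

Lemma qpoch_terminates p N : p != 0 -> qpoch (p ^+ N)^-1 p N.+1 = 0.
Proof. by move=> hp; rewrite qpochS mulVf ?subrr ?mulr0 // expf_neq0. Qed.

Lemma one_sub_div (v w : F) : v != 0 -> (v - w != 0) = (1 - w / v != 0).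
Proof.
move=> hv; have -> : v - w = v * (1 - w / v) by field.
by rewrite mulf_eq0 negb_or hv.
Qed.

Lemma invf_sub_neq0 (x y : F) : x != 0 -> 1 - y * x != 0 -> x^-1 - y != 0.
Proof.
move=> hx h; have -> : x^-1 - y = (1 - y * x) / x by field.
by rewrite mulf_neq0 ?invr_neq0.
Qed.

Lemma one_sub_invf_neq0 (x y : F) : x != 0 -> x - y != 0 -> 1 - x^-1 * y != 0.
Proof. by move=> hx h; rewrite mulrC -one_sub_div. Qed.

Lemma qpoch_reverse (w p : F) m : p != 0 ->
  qpoch (w * p / p ^+ m) p m = \prod_(i < m) (1 - w / p ^+ i).
Proof.
move=> hp; rewrite /qpoch (reindex_inj rev_ord_inj) /=.
apply: eq_bigr => i _; congr (_ - _).
have e : m = ((m - i.+1) + i.+1)%N by rewrite subnK.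
rewrite [in p ^+ m]e exprD exprS; field.
by rewrite hp !expf_neq0.
Qed.

Lemma qpoch_reverse_ratio (w1 w2 p : F) m : p != 0 -> w1 != 0 -> w2 != 0 ->
  (forall i, 1 - p ^+ i / w2 != 0) ->
  qpoch (w1 * p / p ^+ m) p m / qpoch (w2 * p / p ^+ m) p m =
  (w1 / w2) ^+ m * (qpoch w1^-1 p m / qpoch w2^-1 p m).
Proof.
move=> hp h1 h2 h3; rewrite !qpoch_reverse // -prodf_div.
have -> : (w1 / w2) ^+ m = \prod_(i < m) (w1 / w2).
  by rewrite prodr_const card_ord.
rewrite /qpoch -prodf_div -big_split /=.
apply: eq_bigr => i _.
have hpi : p ^+ i != 0 by rewrite expf_neq0.
have e1 : w2 - p ^+ i != 0 by rewrite one_sub_div.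
have e2 : p ^+ i - w2 != 0 by rewrite -oppr_eq0 opprB.
by field; rewrite e1 e2 hpi h1 h2.
Qed.

(* The q-Pfaff-Saalschutz summation
     sum_(k<=N) (A;p)_k (B;p)_k (p^-N;p)_k / ((p;p)_k (C;p)_k (ABp^(1-N)/C;p)_k) p^k
       = (C/A;p)_N (C/B;p)_N / ((C;p)_N (C/AB;p)_N),
   proved by induction on N: the N+1 summand minus lambda_N times the
   N summand telescopes, lambda_N being the ratio of consecutive
   right-hand sides. *)
Section Saalschutz.
Variables (A B C p : F).
Hypothesis hp : p != 0.
Hypothesis hA : A != 0.
Hypothesis hB : B != 0.
Hypothesis hC : C != 0.
Hypothesis hpj : forall j, 1 - p ^+ j.+1 != 0.
Hypothesis hCj : forall j, 1 - C * p ^+ j != 0.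
Hypothesis hCAB : forall j, 1 - C * p ^+ j / (A * B) != 0.
Hypothesis hABC : forall i j, 1 - A * B * p ^+ i / (C * p ^+ j) != 0.

Definition saal_term (N k : nat) :=
  qpoch A p k * qpoch B p k * qpoch (p ^+ N)^-1 p k /
  (qpoch p p k * qpoch C p k * qpoch (A * B * p / (C * p ^+ N)) p k) * p ^+ k.

Definition saal_value N :=
  qpoch (C / A) p N * qpoch (C / B) p N / (qpoch C p N * qpoch (C / (A * B)) p N).

Definition saal_ratio N := (1 - C * p ^+ N / A) * (1 - C * p ^+ N / B) /
  ((1 - C * p ^+ N) * (1 - C * p ^+ N / (A * B))).

Definition saal_cert N k := (1 - p ^+ k) * (1 - C * p ^+ k / p) * saal_term N.+1 k /
  (p ^+ k * ((1 - 1 / (p * p ^+ N)) * (1 - C * p ^+ N))).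

Lemma saal_term_step N k :
  saal_term N.+1 k - saal_ratio N * saal_term N k = saal_cert N k.+1 - saal_cert N k.
Proof.
have hpN j : p ^+ j != 0 by rewrite expf_neq0.
have hp1 j : p ^+ j.+1 - 1 != 0 by rewrite -oppr_eq0 opprB hpj.
have hz : 1 - (p ^+ N.+1)^-1 != 0.
  by rewrite -[(p ^+ N.+1)^-1]mul1r -one_sub_div ?hpN ?hp1.
set be := A * B * p / (C * p ^+ N.+1).
have hbe : 1 - be != 0 by rewrite /be exprS -(expr1 p) -exprS hABC.
have hU : qpoch (p ^+ N)^-1 p k = qpoch (p ^+ N.+1)^-1 p k *
    (1 - (p ^+ N.+1)^-1 * p ^+ k) / (1 - (p ^+ N.+1)^-1).
  by rewrite -qpoch_shift // exprS invfM mulrAC mulVf // mul1r.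
have hV : qpoch (A * B * p / (C * p ^+ N)) p k = qpoch be p k * (1 - be * p ^+ k) / (1 - be).
  rewrite -qpoch_shift // /be exprS; congr qpoch; field.
  by rewrite hp hC hpN.
rewrite /saal_cert /saal_term /saal_ratio hU hV !qpochS /be !exprS.
have hPp : qpoch p p k != 0 by apply: qpoch_neq0 => i _; rewrite -exprS hpj.
have hPC : qpoch C p k != 0 by apply: qpoch_neq0 => i _; rewrite hCj.
have hPV : qpoch (A * B * p / (C * (p * p ^+ N))) p k != 0.
  apply: qpoch_neq0 => i _.
  have -> : A * B * p / (C * (p * p ^+ N)) * p ^+ i = A * B * p ^+ i.+1 / (C * p ^+ N.+1).
    by rewrite !exprS; field; rewrite hp hC hpN.
  exact: hABC.
move: hPp hPC hPV.
set x := p ^+ k; set y := p ^+ N.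
move: (qpoch A p k) (qpoch B p k) (qpoch (p * y)^-1 p k) (qpoch p p k) (qpoch C p k)
  (qpoch (A * B * p / (C * (p * y))) p k) => PA PB U Pp PC V hPp hPC hPV.
have h1 : C * y - A * B * x != 0 by rewrite one_sub_div ?mulf_neq0 ?hpN // hABC.
have h2 : C * y - A * B != 0.
  by rewrite one_sub_div ?mulf_neq0 ?hpN // -[A * B]mulr1 -(expr0 p) hABC.
have h3 : A * B - C * y != 0 by rewrite one_sub_div ?mulf_neq0 ?hpN // hCAB.
have h4 : p * y - 1 != 0 by rewrite -exprS hp1.
have h5 : 1 - p * x != 0 by rewrite -exprS hpj.
have h6 := hCj k; have h7 := hCj N; have h8 := hpN k; have h9 := hpN N.
by field; rewrite h1 h2 h3 h4 h5 h6 h7 h8 h9 hPp hPC hPV hp hA hB hC.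
Qed.

Lemma saal_valueS N : saal_value N.+1 = saal_ratio N * saal_value N.
Proof.
have hCAB' j : 1 - C / (A * B) * p ^+ j != 0 by rewrite mulrAC hCAB.
have hq1 : qpoch C p N != 0 by apply: qpoch_neq0 => i _; rewrite hCj.
have hq2 : qpoch (C / (A * B)) p N != 0 by apply: qpoch_neq0 => i _; rewrite hCAB'.
have h1 := hCj N.
have h2 : A * B - C * p ^+ N != 0 by rewrite one_sub_div ?mulf_neq0 // hCAB.
move: hq1 hq2; rewrite /saal_value /saal_ratio !qpochS [C / (A * B) * _]mulrAC.
move: (qpoch (C / A) p N) (qpoch (C / B) p N) (qpoch C p N) (qpoch (C / (A * B)) p N).
by move=> a1 a2 a3 a4 h3 h4; field; rewrite h1 h2 h3 h4 hA hB.
Qed.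

Lemma saal_cert0 N : saal_cert N 0 = 0.
Proof. by rewrite /saal_cert expr0 subrr !mul0r. Qed.

Lemma saal_cert_end N : saal_cert N N.+2 = 0.
Proof. by rewrite /saal_cert /saal_term qpoch_terminates // !(mulr0, mul0r). Qed.

Theorem saalschutz N : \sum_(k < N.+1) saal_term N k = saal_value N.
Proof.
elim: N => [|N IH].
  by rewrite big_ord1 /saal_term /saal_value !qpoch0 expr0 !(mulr1, invr1).
have e k : saal_term N.+1 k =
    saal_ratio N * saal_term N k + (saal_cert N k.+1 - saal_cert N k).
  by rewrite -saal_term_step addrC subrK.
under eq_bigr => k _ do rewrite e.
rewrite big_split /= -mulr_sumr big_ord_recr /= {2}/saal_term qpoch_terminates //.
rewrite !(mulr0, mul0r) addr0 IH saal_valueS.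
rewrite -(big_mkord xpredT (fun k => saal_cert N k.+1 - saal_cert N k)) telescope_sumr //.
by rewrite saal_cert_end saal_cert0 subr0 addr0.
Qed.
End Saalschutz.
End QPochhammer.

Arguments saal_value {F} A B C p N.
Arguments saalschutz {F A B C p}.
Arguments qpoch_reverse_ratio {F w1 w2 p} m.

Ltac field_nz := field; do ?[apply/andP; split]; rewrite ?mulNr ?expf_neq0.

(* The two sides of the theorem, over an arbitrary field and with
   Q = q^(tn) kept abstract. *)
Section Specialisations.
Variable F : fieldType.
Variables (c q Q : F) (d m : nat).
Local Notation p := (q ^+ d).

Definition lhs (a b : F) := \sum_(0 <= k < m.+1)
  qpoch (a * q) p k * qpoch (q / a) p k * qpoch (q / b) p k
  / (qpoch p p k * qpoch c p k * qpoch (q ^+ (d + 3) / (b * c)) p k) * p ^+ k.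

Definition rhs (a b : F) :=
  (1 - a * Q) * (a - Q) / ((a - b) * (1 - a * b))
    * (qpoch (c / (a * q)) p m * qpoch (a * c / q) p m
       / (qpoch c p m * qpoch (c / q ^+ 2) p m))
  + (b - Q) * (a * b - 1 - a ^+ 2 + a * Q) / ((a - b) * (1 - a * b))
    * ((q / b) ^+ m * qpoch (b * c / q) p m * qpoch (q ^+ (d + 2) / c) p m
       / (qpoch c p m * qpoch (q ^+ (d + 3) / (b * c)) p m)).

Hypothesis hQ : Q = q * p ^+ m.
Hypothesis hq : q != 0.
Hypothesis hc : c != 0.
Hypothesis hpj : forall j, 1 - p ^+ j.+1 != 0.
Hypothesis hCj : forall j, 1 - c * p ^+ j != 0.

Let hp : p != 0. Proof. exact: expf_neq0. Qed.

(* q / Q = p^-m: the third factor of each summand starts at p^-m. *)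
Let q_div_Q : q / Q = (p ^+ m)^-1.
Proof. by rewrite hQ; field; rewrite hq expf_neq0. Qed.

(* b = Q: Saalschutz with A = aq, B = q/a, C = c (so AB = q^2). *)
Lemma identity_at_b_eq_Q (a : F) : a != 0 -> a - Q != 0 -> 1 - a * Q != 0 ->
  (forall j, 1 - c * p ^+ j / (q * q) != 0) ->
  (forall i j, 1 - q * q * p ^+ i / (c * p ^+ j) != 0) ->
  lhs a Q = rhs a Q.
Proof.
move=> ha h1 h2 hCAB hABC.
have eAB : a * q * (q / a) = q * q by field.
have hCAB' j : 1 - c * p ^+ j / (a * q * (q / a)) != 0 by rewrite eAB.
have hABC' i j : 1 - a * q * (q / a) * p ^+ i / (c * p ^+ j) != 0 by rewrite eAB.
have := saalschutz hp (mulf_neq0 ha hq) (mulf_neq0 hq (invr_neq0 ha)) hc hpj hCj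
  hCAB' hABC' m.
rewrite /lhs big_mkord /saal_term /saal_value q_div_Q.
have -> : a * q * (q / a) * p / (c * p ^+ m) = q ^+ (d + 3) / (Q * c).
  by rewrite hQ exprD eAB; field_nz.
move=> ->; rewrite /rhs subrr !mul0r addr0.
have -> : c / (q / a) = a * c / q by field_nz.
have q1 : qpoch c p m != 0 by apply: qpoch_neq0 => i _; exact: hCj.
have q2 : qpoch (c / (q * q)) p m != 0.
  by apply: qpoch_neq0 => i _; rewrite mulrAC; exact: hCAB.
by rewrite eAB expr2; field_nz.
Qed.

Lemma lhs_inv (a b : F) : a != 0 -> lhs a^-1 b = lhs a b.
Proof.
move=> ha; apply: eq_bigr => k _.
rewrite -[a^-1 * q]mulrC -[q / a^-1]mulrC invrK.
by congr (_ / _ * _); ring.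
Qed.

Section AtQ.
Variable b : F.
Hypothesis hb : b != 0.
Hypothesis hCAB : forall j, 1 - c * b * p ^+ j / (Q * q * q) != 0.
Hypothesis hABC : forall i j, 1 - Q * q * q * p ^+ i / (b * c * p ^+ j) != 0.
Hypothesis hrev : forall i, 1 - q ^+ 3 * p ^+ i.+1 / (b * c) != 0.

Let hQ0 : Q != 0. Proof. by rewrite hQ mulf_neq0 // !expf_neq0. Qed.

Definition rhs_tail :=
  (q / b) ^+ m * qpoch (b * c / q) p m * qpoch (q ^+ (d + 2) / c) p m
  / (qpoch c p m * qpoch (q ^+ (d + 3) / (b * c)) p m).

(* At a = Q the sum is Saalschutz's with A = Qq, B = q/b, C = c. *)
Lemma lhs_at_a_eq_Q : lhs Q b = saal_value (Q * q) (q / b) c p m.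
Proof.
have hCAB' j : 1 - c * p ^+ j / (Q * q * (q / b)) != 0.
  suff -> : c * p ^+ j / (Q * q * (q / b)) = c * b * p ^+ j / (Q * q * q) by [].
  by field_nz.
have hABC' i j : 1 - Q * q * (q / b) * p ^+ i / (c * p ^+ j) != 0.
  suff -> : Q * q * (q / b) * p ^+ i / (c * p ^+ j) =
    Q * q * q * p ^+ i / (b * c * p ^+ j) by [].
  by field_nz.
rewrite -(saalschutz hp (mulf_neq0 hQ0 hq) (mulf_neq0 hq (invr_neq0 hb))
  hc hpj hCj hCAB' hABC') /lhs big_mkord /saal_term q_div_Q.
have -> : Q * q * (q / b) * p / (c * p ^+ m) = q ^+ (d + 3) / (b * c).
  by rewrite hQ exprD; field_nz.
by apply: eq_bigr => k _; congr (_ / _ * _); rewrite mulrAC.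
Qed.

(* Reversing two of its q-shifted factorials puts that value in the form
   of the second term of the right-hand side. *)
Lemma saal_value_at_Q : saal_value (Q * q) (q / b) c p m = rhs_tail.
Proof.
rewrite /saal_value /rhs_tail.
set w1 := c / (q ^+ 2 * p); set w2 := b * c / (q ^+ 3 * p).
have hw1 : w1 != 0 by rewrite /w1 mulf_neq0 // invr_neq0 // mulf_neq0 // expf_neq0.
have hw2 : w2 != 0 by rewrite /w2 mulf_neq0 ?mulf_neq0 // invr_neq0 // mulf_neq0 // expf_neq0.
have hrev' i : 1 - p ^+ i / w2 != 0.
  suff -> : p ^+ i / w2 = q ^+ 3 * p ^+ i.+1 / (b * c) by [].
  by rewrite /w2 [p ^+ i.+1]exprS; field_nz.
have := qpoch_reverse_ratio m hp hw1 hw2 hrev'.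
have -> : w1 / w2 = q / b by rewrite /w1 /w2; field_nz.
have -> : w1^-1 = q ^+ (d + 2) / c by rewrite /w1 exprD; field_nz.
have -> : w2^-1 = q ^+ (d + 3) / (b * c) by rewrite /w2 exprD; field_nz.
have -> : w1 * p / p ^+ m = c / (Q * q) by rewrite /w1 hQ; field_nz.
have -> : w2 * p / p ^+ m = c / (Q * q * (q / b)) by rewrite /w2 hQ; field_nz.
have -> : c / (q / b) = b * c / q by field_nz.
have Z : qpoch (c / (Q * q * (q / b))) p m != 0.
  apply: qpoch_neq0 => i _; have hQ1 := hQ0.
  suff -> : c / (Q * q * (q / b)) * p ^+ i = c * b * p ^+ i / (Q * q * q) by [].
  by field_nz.
have Y1 : qpoch c p m != 0 by apply: qpoch_neq0 => i _.
have Y2 : qpoch (q ^+ (d + 3) / (b * c)) p m != 0.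
  apply: qpoch_neq0 => i _; suff -> : q ^+ (d + 3) / (b * c) * p ^+ i =
    q ^+ 3 * p ^+ i.+1 / (b * c) by [].
  by rewrite exprD [p ^+ i.+1]exprS; field_nz.
move: Z Y1 Y2; move: (qpoch (c / (Q * q)) p m) (qpoch (c / (Q * q * (q / b))) p m).
move: (qpoch (b * c / q) p m) (qpoch (q ^+ (d + 2) / c) p m) (qpoch c p m).
move: (qpoch (q ^+ (d + 3) / (b * c)) p m) => W2 Y1 W1 X2 X1 Z hZ hY1 hW2.
move/(congr1 (fun r => r * Z)); rewrite mulfVK // => ->.
by field_nz.
Qed.

(* The first term of the right-hand side vanishes and the coefficient of
   the second one is 1, both at a = Q and at a = 1/Q. *)
Lemma identity_at_a_eq_Q : Q - b != 0 -> 1 - Q * b != 0 -> lhs Q b = rhs Q b.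
Proof.
move=> h1 h2; rewrite lhs_at_a_eq_Q saal_value_at_Q /rhs -/rhs_tail subrr mulr0 !mul0r add0r.
by field_nz.
Qed.

Lemma identity_at_a_eq_invQ : Q - b != 0 -> 1 - b * Q != 0 -> lhs Q^-1 b = rhs Q^-1 b.
Proof.
move=> h1 h2; rewrite lhs_inv // lhs_at_a_eq_Q saal_value_at_Q /rhs -/rhs_tail mulVf //.
rewrite subrr !mul0r add0r.
by have hQ1 := hQ0; field_nz.
Qed.
End AtQ.
End Specialisations.

Arguments lhs {F} c q d m a b.
Arguments rhs {F} c q Q d m a b.
Arguments identity_at_b_eq_Q {F c q Q d m}.
Arguments identity_at_a_eq_Q {F c q Q d m}.
Arguments identity_at_a_eq_invQ {F c q Q d m}.

Notation PolyQ := Defs.Poly.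

Lemma toRF_eq0 (x : PolyQ) : (toRF x == 0) = (x == 0). Proof. exact: tofrac_eq0. Qed.
Lemma toRF1 : toRF 1 = 1. Proof. exact: tofrac1. Qed.
Lemma toRFD (x y : PolyQ) : toRF (x + y) = toRF x + toRF y. Proof. exact: tofracD. Qed.
Lemma toRFB (x y : PolyQ) : toRF (x - y) = toRF x - toRF y. Proof. exact: tofracB. Qed.
Lemma toRFM (x y : PolyQ) : toRF (x * y) = toRF x * toRF y. Proof. exact: tofracM. Qed.
Lemma toRFX (x : PolyQ) k : toRF (x ^+ k) = toRF x ^+ k. Proof. exact: tofracXn. Qed.

Definition subst_at (j : 'I_4) (w : RF) (i : 'I_4) : RF :=
  if i == j then w else toRF 'X_i.

Definition spec (j : 'I_4) (w : RF) : PolyQ -> RF :=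
  mmap (toRF \o (@mpolyC 4 rat))%FUN (subst_at j w).

HB.instance Definition _ j w :=
  GRing.RMorphism.copy (spec j w) (mmap (toRF \o (@mpolyC 4 rat))%FUN (subst_at j w)).

Lemma specX j w i : spec j w 'X_i = if i == j then w else toRF 'X_i.
Proof. by rewrite /spec mmapX mmap1U. Qed.

Lemma specC j w c : spec j w c%:MP = toRF c%:MP.
Proof. by rewrite /spec mmapC. Qed.

Section Kernel.
Variable E : {rmorphism PolyQ -> RF}.
Variables (f s u v : PolyQ).
Hypothesis bezout : u * f + v * s = 1.
Hypothesis EC : forall c, E c%:MP = toRF c%:MP.

Definition reduced (N : PolyQ) := exists k r g,
  s ^+ k * N = r + f * g /\ E N * toRF s ^+ k = toRF r.

Hypothesis EX : forall i : 'I_4, reduced 'X_i.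

Lemma reduced_add N1 N2 : reduced N1 -> reduced N2 -> reduced (N1 + N2).
Proof.
move=> [k1 [r1 [g1 [E1 F1]]]] [k2 [r2 [g2 [E2 F2]]]].
exists (k1 + k2)%N, (s ^+ k2 * r1 + s ^+ k1 * r2), (s ^+ k2 * g1 + s ^+ k1 * g2); split.
  rewrite exprD mulrDr.
  have -> : s ^+ k1 * s ^+ k2 * N1 = s ^+ k2 * (s ^+ k1 * N1) by ring.
  have -> : s ^+ k1 * s ^+ k2 * N2 = s ^+ k1 * (s ^+ k2 * N2) by ring.
  by rewrite E1 E2; ring.
by rewrite (rmorphD E) !(toRFD, toRFM, toRFX) -F1 -F2 exprD; ring.
Qed.

Lemma reduced_mul N1 N2 : reduced N1 -> reduced N2 -> reduced (N1 * N2).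
Proof.
move=> [k1 [r1 [g1 [E1 F1]]]] [k2 [r2 [g2 [E2 F2]]]].
exists (k1 + k2)%N, (r1 * r2), (r1 * g2 + g1 * r2 + f * g1 * g2); split.
  have -> : s ^+ (k1 + k2) * (N1 * N2) = (s ^+ k1 * N1) * (s ^+ k2 * N2).
    by rewrite exprD; ring.
  by rewrite E1 E2; ring.
by rewrite (rmorphM E) !(toRFD, toRFM, toRFX) -F1 -F2 exprD; ring.
Qed.

Lemma reduced_C c : reduced c%:MP.
Proof. by exists 0%N, c%:MP, 0; rewrite expr0 mul1r mulr0 addr0 EC mulr1. Qed.

Lemma reduced_all N : reduced N.
Proof.
rewrite [N]mpolyE; elim/big_ind: _.
- by rewrite -mpolyC0; apply: reduced_C.
- exact: reduced_add.
move=> m _; rewrite -mul_mpolyC; apply: reduced_mul; first exact: reduced_C.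
rewrite mpolyXE_id; elim/big_ind: _.
- by rewrite -mpolyC1; apply: reduced_C.
- exact: reduced_mul.
move=> i _; elim: (m i) => [|j IH]; first by rewrite expr0 -mpolyC1; apply: reduced_C.
by rewrite exprS; apply: reduced_mul.
Qed.

(* s is invertible modulo f, hence cancellable in divisibility by f. *)
Lemma dvd_cancel k N g : s ^+ k * N = f * g -> exists g', N = f * g'.
Proof.
elim: k N g => [|k IH] N g; first by rewrite expr0 mul1r => ->; exists g.
rewrite exprSr -mulrA => /IH [g1 sN].
exists (u * N + v * g1).
rewrite -[LHS]mulr1 -bezout mulrDr.
have -> : N * (v * s) = v * (s * N) by ring.
by rewrite sN; ring.
Qed.

Lemma kernel_dvd N : E N = 0 -> exists g, N = f * g.
Proof.
move=> h; have [k [r [g [E1 F1]]]] := reduced_all N.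
move: F1; rewrite h mul0r => /esym/eqP; rewrite toRF_eq0 => /eqP r0.
by apply: (@dvd_cancel k N g); rewrite E1 r0 add0r.
Qed.
End Kernel.

Lemma spec_kernel j (g N : PolyQ) : spec j (toRF g) N = 0 -> exists h, N = ('X_j - g) * h.
Proof.
apply: (@kernel_dvd _ _ 1 0 1); [by ring | exact: specC | move=> i].
rewrite /reduced /= specX; case: (i =P j) => [->|_].
  by exists 0%N, g, 1; rewrite expr0 !mulr1 mul1r addrC subrK.
by exists 0%N, 'X_i, 0; rewrite expr0 mul1r mulr0 addr0 mulr1.
Qed.

Lemma spec_inv_kernel j (s N : PolyQ) : s != 0 ->
  spec j (toRF s)^-1 N = 0 -> exists h, N = (1 - 'X_j * s) * h.
Proof.
move=> hs; apply: (@kernel_dvd _ _ s 1 'X_j); [by ring | exact: specC | move=> i].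
rewrite /reduced /= specX; case: (i =P j) => [->|_].
  exists 1%N, 1, (-1); split; first by ring.
  by rewrite expr1 mulVf ?toRF1 // toRF_eq0.
by exists 0%N, 'X_i, 0; rewrite expr0 mul1r mulr0 addr0 mulr1.
Qed.

Section Specialises.
Variables (R : comNzRingType) (K : fieldType).
Variables iota E1 E2 E3 : {rmorphism R -> K}.

Definition specialises (u v1 v2 v3 : K) := exists N D : R,
  [/\ iota D != 0, E1 D != 0, E2 D != 0, E3 D != 0 &
     [/\ u = iota N / iota D, v1 = E1 N / E1 D, v2 = E2 N / E2 D & v3 = E3 N / E3 D]].

Lemma specialises_elt P : specialises (iota P) (E1 P) (E2 P) (E3 P).
Proof. by exists P, 1; rewrite !rmorph1 !divr1 oner_neq0. Qed.

Lemma specialises_add u v1 v2 v3 u' w1 w2 w3 :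
  specialises u v1 v2 v3 -> specialises u' w1 w2 w3 ->
  specialises (u + u') (v1 + w1) (v2 + w2) (v3 + w3).
Proof.
move=> [N [D [h0 h1 h2 h3 [-> -> -> ->]]]] [N' [D' [h0' h1' h2' h3' [-> -> -> ->]]]].
exists (N * D' + N' * D), (D * D'); rewrite !rmorphD !rmorphM.
by split; rewrite ?mulf_neq0 //; split; rewrite addf_div.
Qed.

Lemma specialises_opp u v1 v2 v3 :
  specialises u v1 v2 v3 -> specialises (- u) (- v1) (- v2) (- v3).
Proof.
move=> [N [D [h0 h1 h2 h3 [-> -> -> ->]]]].
by exists (- N), D; rewrite !rmorphN !mulNr.
Qed.

Lemma specialises_mul u v1 v2 v3 u' w1 w2 w3 :
  specialises u v1 v2 v3 -> specialises u' w1 w2 w3 ->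
  specialises (u * u') (v1 * w1) (v2 * w2) (v3 * w3).
Proof.
move=> [N [D [h0 h1 h2 h3 [-> -> -> ->]]]] [N' [D' [h0' h1' h2' h3' [-> -> -> ->]]]].
by exists (N * N'), (D * D'); rewrite !rmorphM !mulf_div !mulf_neq0.
Qed.

Lemma specialises_inv u v1 v2 v3 : specialises u v1 v2 v3 ->
  u != 0 -> v1 != 0 -> v2 != 0 -> v3 != 0 -> specialises u^-1 v1^-1 v2^-1 v3^-1.
Proof.
move=> [N [D [h0 h1 h2 h3 [-> -> -> ->]]]] n0 n1 n2 n3.
exists D, N; rewrite !invf_div; split => //.
- by apply: contraNneq n0 => ->; rewrite mul0r.
- by apply: contraNneq n1 => ->; rewrite mul0r.
- by apply: contraNneq n2 => ->; rewrite mul0r.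
- by apply: contraNneq n3 => ->; rewrite mul0r.
Qed.

Lemma specialises_1 : specialises 1 1 1 1.
Proof. by have := specialises_elt 1; rewrite !rmorph1. Qed.

Lemma specialises_X u v1 v2 v3 k : specialises u v1 v2 v3 ->
  specialises (u ^+ k) (v1 ^+ k) (v2 ^+ k) (v3 ^+ k).
Proof.
move=> h; elim: k => [|k IH]; first by rewrite !expr0; exact: specialises_1.
by rewrite !exprS; apply: specialises_mul.
Qed.

Lemma specialises_prod n (F : 'I_n -> K) G1 G2 G3 :
  (forall i, specialises (F i) (G1 i) (G2 i) (G3 i)) ->
  specialises (\prod_(i < n) F i) (\prod_(i < n) G1 i) (\prod_(i < n) G2 i)
    (\prod_(i < n) G3 i).
Proof.
elim: n F G1 G2 G3 => [|n IH] F G1 G2 G3 h; first by rewrite !big_ord0; exact: specialises_1.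
by rewrite !big_ord_recr /=; apply: specialises_mul => //; apply: IH.
Qed.

Lemma specialises_sum n (F : nat -> K) G1 G2 G3 :
  (forall i, (i < n)%N -> specialises (F i) (G1 i) (G2 i) (G3 i)) ->
  specialises (\sum_(0 <= i < n) F i) (\sum_(0 <= i < n) G1 i)
    (\sum_(0 <= i < n) G2 i) (\sum_(0 <= i < n) G3 i).
Proof.
elim: n => [|n IH] h.
  by rewrite !big_geq //; have := specialises_elt 0; rewrite !rmorph0.
rewrite !big_nat_recr //=; apply: specialises_add; last exact: h.
by apply: IH => i hi; apply: h; apply: ltnW.
Qed.

Lemma specialises_qpoch x v1 v2 v3 p w1 w2 w3 k :
  specialises x v1 v2 v3 -> specialises p w1 w2 w3 ->
  specialises (qpoch x p k) (qpoch v1 w1 k) (qpoch v2 w2 k) (qpoch v3 w3 k).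
Proof.
move=> hx hp; apply: specialises_prod => i.
apply: specialises_add; first exact: specialises_1.
by apply/specialises_opp/specialises_mul => //; apply: specialises_X.
Qed.
End Specialises.

Arguments specialises {R K} iota E1 E2 E3 u v1 v2 v3.
Arguments specialises_elt {R K} iota E1 E2 E3 P.

Lemma coprime_of_kernel (E : {rmorphism PolyQ -> RF}) (f D : PolyQ) :
  E f = 0 -> f != 0 -> (forall N, E N = 0 -> exists g, N = f * g) ->
  E D != 0 -> pcoprime D f.
Proof.
move=> Ef fn0 kerE ED h [k Dk] [g fg].
have /eqP : E (h * g) = 0 by rewrite -fg.
rewrite rmorphM mulf_eq0 => /orP [/eqP Eh|/eqP Eg].
  by move: ED; rewrite Dk rmorphM Eh mul0r eqxx.
have [g' gg'] := kerE g Eg.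
have hg : h * g' = 1.
  by apply: (mulfI fn0); rewrite mulr1 [in RHS]fg gg' mulrCA.
by apply/unitrP; exists g'; rewrite mulrC hg.
Qed.

Lemma inord_eqE (i j : nat) : (i < 4)%N -> (j < 4)%N ->
  (@inord 3 i == @inord 3 j) = (i == j).
Proof. by move=> hi hj; apply/eqP/eqP => [/(congr1 val)|->]; rewrite /= ?inordK. Qed.

Lemma monomial_neq0 (m : 'X_{1..4}) : toRF 'X_[m] != 0.
Proof.
rewrite toRF_eq0; apply/eqP => /(congr1 (fun p : PolyQ => p@_m)).
by rewrite mcoeffX eqxx mcoeff0 => /eqP; rewrite oner_eq0.
Qed.

Lemma monomial_sub_neq0 (m1 m2 : 'X_{1..4}) (i : 'I_4) : m1 i != m2 i ->
  toRF 'X_[m1] - toRF 'X_[m2] != 0.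
Proof.
move=> h; rewrite -toRFB toRF_eq0; apply/eqP => /(congr1 (fun p : PolyQ => p@_m1)).
rewrite mcoeffB !mcoeffX eqxx mcoeff0.
have -> : (m2 == m1) = false by apply/eqP => e2; rewrite e2 eqxx in h.
by rewrite subr0 => /eqP; rewrite oner_eq0.
Qed.

Lemma monomial_one_sub_div_neq0 (m1 m2 : 'X_{1..4}) (i : 'I_4) : m1 i != m2 i ->
  1 - toRF 'X_[m1] / toRF 'X_[m2] != 0.
Proof.
by move=> h; rewrite -one_sub_div ?monomial_neq0 // (@monomial_sub_neq0 _ _ i) // eq_sym.
Qed.

Lemma toRF_monomialD (m1 m2 : 'X_{1..4}) : toRF 'X_[m1 + m2] = toRF 'X_[m1] * toRF 'X_[m2].
Proof. by rewrite mpolyXD toRFM. Qed.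
Lemma toRF_monomialMn (m : 'X_{1..4}) k : toRF 'X_[m *+ k] = toRF 'X_[m] ^+ k.
Proof. by rewrite -mpolyXn toRFX. Qed.
Lemma toRF_monomial0 : toRF 'X_[0] = 1.
Proof. by rewrite mpolyX0 toRF1. Qed.

Definition ia : 'I_4 := inord 0.
Definition ib : 'I_4 := inord 1.
Definition ic : 'I_4 := inord 2.
Definition iq : 'I_4 := inord 3.

Lemma faE : fa = toRF 'X_[U_(ia)]. Proof. by []. Qed.
Lemma fbE : fb = toRF 'X_[U_(ib)]. Proof. by []. Qed.
Lemma fcE : fc = toRF 'X_[U_(ic)]. Proof. by []. Qed.
Lemma fqE : fq = toRF 'X_[U_(iq)]. Proof. by []. Qed.

Lemma fa_neq0 : fa != 0. Proof. exact: monomial_neq0. Qed.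
Lemma fb_neq0 : fb != 0. Proof. exact: monomial_neq0. Qed.
Lemma fc_neq0 : fc != 0. Proof. exact: monomial_neq0. Qed.
Lemma fq_neq0 : fq != 0. Proof. exact: monomial_neq0. Qed.

(* Proves that M1 - M2 or 1 - M1/M2, for monomials M1, M2 in a, b, c, q, is
   nonzero by comparing the exponents of the variable of index i. *)
Ltac monomial_neq i :=
  rewrite ?faE ?fbE ?fcE ?fqE -?toRF_monomialMn -?toRF_monomialD;
  lazymatch goal with
  | |- is_true (1 - _ / _ != 0) => apply: (@monomial_one_sub_div_neq0 _ _ i)
  | _ => rewrite -?toRF_monomial0; apply: (@monomial_sub_neq0 _ _ i)
  end;
  rewrite !(@mnmDE 4, @mulmnE 4, @mnm1E 4, @mnm0E 4) /ia /ib /ic /iq ?inord_eqE //=; lia.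

Ltac specialise_ops := repeat first
  [ assumption
  | apply: specialises_qpoch | apply: specialises_add | apply: specialises_opp
  | apply: specialises_mul | apply: specialises_inv | apply: specialises_X
  | apply: specialises_1 ].

Ltac nonzero := repeat first
  [ assumption | apply: mulf_neq0 | apply: expf_neq0 ].

Section SpecialiseDifference.
Variables (R : comNzRingType) (K : fieldType) (iota E1 E2 E3 : {rmorphism R -> K}).
Variables (a a1 a2 b b3 c q Q : K) (d m : nat).
Local Notation p := (q ^+ d).
Hypotheses (Ra : specialises iota E1 E2 E3 a a1 a2 a)
  (Rb : specialises iota E1 E2 E3 b b b b3) (Rc : specialises iota E1 E2 E3 c c c c) (Rq : specialises iota E1 E2 E3 q q q q)
  (RQ : specialises iota E1 E2 E3 Q Q Q Q).
Hypotheses (ha : a != 0) (ha1 : a1 != 0) (ha2 : a2 != 0) (hb : b != 0) (hb3 : b3 != 0)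
  (hc : c != 0) (hq : q != 0).
Hypotheses (hab : (a - b) * (1 - a * b) != 0) (hab1 : (a1 - b) * (1 - a1 * b) != 0)
  (hab2 : (a2 - b) * (1 - a2 * b) != 0) (hab3 : (a - b3) * (1 - a * b3) != 0).
Hypotheses (hk1 : forall k, qpoch p p k != 0) (hk2 : forall k, qpoch c p k != 0)
  (hk3 : forall k, qpoch (q ^+ (d + 3) / (b * c)) p k != 0)
  (hk4 : forall k, qpoch (q ^+ (d + 3) / (b3 * c)) p k != 0)
  (hk5 : qpoch (c / q ^+ 2) p m != 0).

Lemma specialises_difference :
  specialises iota E1 E2 E3 (lhs c q d m a b - rhs c q Q d m a b)
    (lhs c q d m a1 b - rhs c q Q d m a1 b) (lhs c q d m a2 b - rhs c q Q d m a2 b)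
    (lhs c q d m a b3 - rhs c q Q d m a b3).
Proof.
have := hk2 m; have := hk3 m; have := hk4 m => hk4m hk3m hk2m.
apply: specialises_add; last apply: specialises_opp.
  apply: specialises_sum => k _.
  have := hk1 k; have := hk2 k; have := hk3 k; have := hk4 k => ? ? ? ?.
  by specialise_ops; nonzero.
by rewrite /rhs; specialise_ops; nonzero.
Qed.
End SpecialiseDifference.

Arguments specialises_difference {R K iota E1 E2 E3 a a1 a2 b b3 c q Q d m}.

HB.instance Definition _ := GRing.RMorphism.copy toRF (@FracField.tofrac PolyQ).

(* The setting of the theorem, with tn = e = dm + 1 and Q = q^e. *)
Section Concrete.
Variables d e m : nat.
Hypothesis d_gt0 : (0 < d)%N.
Hypothesis e_def : e = (d * m).+1.
Local Notation Q := (fq ^+ e).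
Local Notation p := (fq ^+ d).

Lemma Q_neq0 : Q != 0. Proof. exact: expf_neq0 fq_neq0. Qed.

Lemma one_sub_p j : 1 - p ^+ j.+1 != 0. Proof. monomial_neq iq. Qed.
Lemma one_sub_cp j : 1 - fc * p ^+ j != 0. Proof. monomial_neq ic. Qed.
Lemma a_sub_b : fa - fb != 0. Proof. monomial_neq ia. Qed.
Lemma one_sub_ab : 1 - fa * fb != 0. Proof. monomial_neq ia. Qed.
Lemma a_sub_Q : fa - Q != 0. Proof. monomial_neq ia. Qed.
Lemma one_sub_aQ : 1 - fa * Q != 0. Proof. monomial_neq ia. Qed.
Lemma Q_sub_b : Q - fb != 0. Proof. monomial_neq ib. Qed.
Lemma b_sub_Q : fb - Q != 0. Proof. monomial_neq ib. Qed.
Lemma one_sub_Qb : 1 - Q * fb != 0. Proof. monomial_neq ib. Qed.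
Lemma one_sub_bQ : 1 - fb * Q != 0. Proof. monomial_neq ib. Qed.
Lemma one_sub_QQ : 1 - Q * Q != 0. Proof. monomial_neq iq. Qed.

Lemma invQ_sub_b : Q^-1 - fb != 0.
Proof. exact: invf_sub_neq0 Q_neq0 one_sub_bQ. Qed.
Lemma one_sub_invQb : 1 - Q^-1 * fb != 0.
Proof. exact: one_sub_invf_neq0 Q_neq0 Q_sub_b. Qed.
Lemma invQ_sub_Q : Q^-1 - Q != 0.
Proof. exact: invf_sub_neq0 Q_neq0 one_sub_QQ. Qed.

Lemma hyp_CAB_at_b j : 1 - fc * p ^+ j / (fq * fq) != 0. Proof. monomial_neq ic. Qed.
Lemma hyp_ABC_at_b i j : 1 - fq * fq * p ^+ i / (fc * p ^+ j) != 0. Proof. monomial_neq ic. Qed.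
Lemma hyp_CAB_at_a j : 1 - fc * fb * p ^+ j / (Q * fq * fq) != 0. Proof. monomial_neq ic. Qed.
Lemma hyp_ABC_at_a i j : 1 - Q * fq * fq * p ^+ i / (fb * fc * p ^+ j) != 0.
Proof. monomial_neq ic. Qed.
Lemma hyp_rev_at_a i : 1 - fq ^+ 3 * p ^+ i.+1 / (fb * fc) != 0. Proof. monomial_neq ic. Qed.

Lemma qpoch_p_neq0 k : qpoch p p k != 0.
Proof. by apply: qpoch_neq0 => i _; rewrite -exprS; exact: one_sub_p. Qed.

Lemma qpoch_c_neq0 k : qpoch fc p k != 0.
Proof. by apply: qpoch_neq0 => i _; exact: one_sub_cp. Qed.

Lemma qpoch_bc_neq0 k x : x = fb \/ x = Q -> qpoch (fq ^+ (d + 3) / (x * fc)) p k != 0.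
Proof. by case=> -> ; apply: qpoch_neq0 => i _; rewrite mulrAC; monomial_neq ic. Qed.

Lemma qpoch_cq2_neq0 : qpoch (fc / fq ^+ 2) p m != 0.
Proof. by apply: qpoch_neq0 => i _; rewrite mulrAC; monomial_neq ic. Qed.

Local Notation E1 := (spec ia Q^-1).
Local Notation E2 := (spec ia Q).
Local Notation E3 := (spec ib Q).
Local Notation f1 := (1 - Xa * Xq ^+ e).
Local Notation f2 := (Xa - Xq ^+ e).
Local Notation f3 := (Xb - Xq ^+ e).

Let Xqe : toRF (Xq ^+ e) = Q. Proof. exact: toRFX. Qed.

Lemma kernel_E1 N : E1 N = 0 -> exists g, N = f1 * g.
Proof.
have hs : Xq ^+ e != 0 by rewrite -toRF_eq0 Xqe Q_neq0.
by have := spec_inv_kernel ia (Xq ^+ e) N hs; rewrite Xqe.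
Qed.

Lemma kernel_E2 N : E2 N = 0 -> exists g, N = f2 * g.
Proof. by have := spec_kernel ia (Xq ^+ e) N; rewrite Xqe. Qed.

Lemma kernel_E3 N : E3 N = 0 -> exists g, N = f3 * g.
Proof. by have := spec_kernel ib (Xq ^+ e) N; rewrite Xqe. Qed.

Lemma E1_f1 : E1 f1 = 0.
Proof.
rewrite rmorphB rmorph1 rmorphM rmorphXn /= /Xa /Xq !specX /ia /iq !inord_eqE //=.
by rewrite mulVf ?subrr // Q_neq0.
Qed.

Lemma E2_f2 : E2 f2 = 0.
Proof. by rewrite rmorphB rmorphXn /= /Xa /Xq !specX /ia /iq !inord_eqE //= subrr. Qed.

Lemma E3_f3 : E3 f3 = 0.
Proof. by rewrite rmorphB rmorphXn /= /Xb /Xq !specX /ib /iq !inord_eqE //= subrr. Qed.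

Lemma E1_f2 : E1 f2 = Q^-1 - Q.
Proof. by rewrite rmorphB rmorphXn /= /Xa /Xq !specX /ia /iq !inord_eqE. Qed.

Lemma E1_f3 : E1 f3 = fb - Q.
Proof. by rewrite rmorphB rmorphXn /= /Xb /Xq !specX /ia /ib /iq !inord_eqE. Qed.

Lemma E2_f3 : E2 f3 = fb - Q.
Proof. by rewrite rmorphB rmorphXn /= /Xb /Xq !specX /ia /ib /iq !inord_eqE. Qed.

Lemma f1_neq0 : f1 != 0.
Proof.
apply: contraNneq one_sub_aQ => h; have := congr1 (spec ib Q) h.
rewrite rmorph0 rmorphB rmorph1 rmorphM rmorphXn /= /Xa /Xq !specX /ia /ib /iq !inord_eqE //=.
by move/eqP.
Qed.

Lemma f2_neq0 : f2 != 0.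
Proof. by apply: contraNneq invQ_sub_Q => h; rewrite -E1_f2 h rmorph0. Qed.

Lemma f3_neq0 : f3 != 0.
Proof. by apply: contraNneq b_sub_Q => h; rewrite -E1_f3 h rmorph0. Qed.

Lemma cong3_of_specialises A B : specialises toRF E1 E2 E3 (A - B) 0 0 0 ->
  cong3 A B f1 f2 f3.
Proof.
move=> [N [D [h0 h1 h2 h3 [eAB z1 z2 z3]]]].
have num0 (E : {rmorphism PolyQ -> RF}) : E D != 0 -> 0 = E N / E D -> E N = 0.
  by move=> hD /esym/eqP; rewrite mulf_eq0 invr_eq0 (negbTE hD) orbF => /eqP.
have [g3 e3] := @kernel_E3 N (num0 _ h3 z3).
have /kernel_E2 [g2 e2] : E2 g3 = 0.
  move: (num0 _ h2 z2); rewrite e3 rmorphM /= E2_f3 => /eqP.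
  by rewrite mulf_eq0 (negbTE b_sub_Q) => /eqP.
have /kernel_E1 [g1 e1] : E1 g2 = 0.
  move: (num0 _ h1 z1); rewrite e3 e2 !rmorphM /= E1_f3 E1_f2 => /eqP.
  by rewrite !mulf_eq0 (negbTE b_sub_Q) (negbTE invQ_sub_Q) => /eqP.
exists g1, D; split.
- by apply: contraNneq h0 => ->; rewrite rmorph0.
- exact: coprime_of_kernel E1_f1 f1_neq0 kernel_E1 h1.
- exact: coprime_of_kernel E2_f2 f2_neq0 kernel_E2 h2.
- exact: coprime_of_kernel E3_f3 f3_neq0 kernel_E3 h3.
have perm (x y z w : PolyQ) : z * (y * (x * w)) = x * y * z * w by ring.
by rewrite eAB /= e3 e2 e1 perm toRFM mulrA.
Qed.

(* The theorem for e = dm + 1: by the Saalschutz identities, the difference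
   of the two sides specialises to 0 under E1, E2 and E3. *)
Theorem congruence : cong3 (lhs fc fq d m fa fb) (rhs fc fq Q d m fa fb) f1 f2 f3.
Proof.
have hQ : Q = fq * p ^+ m by rewrite e_def exprS exprM.
have Ra : specialises toRF E1 E2 E3 fa Q^-1 Q fa.
  by have := specialises_elt toRF E1 E2 E3 Xa; rewrite /= /Xa !specX /ia /ib !inord_eqE.
have Rb : specialises toRF E1 E2 E3 fb fb fb Q.
  by have := specialises_elt toRF E1 E2 E3 Xb; rewrite /= /Xb !specX /ia /ib !inord_eqE.
have Rc : specialises toRF E1 E2 E3 fc fc fc fc.
  by have := specialises_elt toRF E1 E2 E3 Xc; rewrite /= /Xc !specX /ia /ib /ic !inord_eqE.
have Rq : specialises toRF E1 E2 E3 fq fq fq fq.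
  by have := specialises_elt toRF E1 E2 E3 Xq; rewrite /= /Xq !specX /ia /ib /iq !inord_eqE.
have RQ : specialises toRF E1 E2 E3 Q Q Q Q by apply: specialises_X.
have := specialises_difference Ra Rb Rc Rq RQ fa_neq0
  (invr_neq0 Q_neq0) Q_neq0 fb_neq0 Q_neq0 fc_neq0 fq_neq0
  (mulf_neq0 a_sub_b one_sub_ab) (mulf_neq0 invQ_sub_b one_sub_invQb)
  (mulf_neq0 Q_sub_b one_sub_Qb) (mulf_neq0 a_sub_Q one_sub_aQ)
  qpoch_p_neq0 qpoch_c_neq0 (fun k => qpoch_bc_neq0 k fb (or_introl erefl))
  (fun k => qpoch_bc_neq0 k Q (or_intror erefl)) qpoch_cq2_neq0.
rewrite (identity_at_a_eq_invQ hQ fq_neq0 fc_neq0 one_sub_p one_sub_cp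
  fb fb_neq0 hyp_CAB_at_a hyp_ABC_at_a hyp_rev_at_a Q_sub_b one_sub_bQ).
rewrite (identity_at_a_eq_Q hQ fq_neq0 fc_neq0 one_sub_p one_sub_cp
  fb fb_neq0 hyp_CAB_at_a hyp_ABC_at_a hyp_rev_at_a Q_sub_b one_sub_Qb).
rewrite (identity_at_b_eq_Q hQ fq_neq0 fc_neq0 one_sub_p one_sub_cp
  fa fa_neq0 a_sub_Q one_sub_aQ hyp_CAB_at_b hyp_ABC_at_b).
rewrite !subrr; exact: cong3_of_specialises.
Qed.
End Concrete.

(* t n = t^2 = 1 (mod d) for t = 1 or t = d - 1, so t n = d m + 1. *)
Lemma tn_eq (d n t : nat) : (2 <= d)%N -> (t = 1 \/ t = d - 1)%N -> n = t %[mod d] ->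
  (t * n = (d * ((t * n - 1) %/ d)).+1)%N.
Proof.
move=> hd ht hmod.
have htn : ((t * n) %% d = 1)%N.
  rewrite -modnMm hmod modnMm.
  case: ht => ->; first by rewrite muln1 modn_small.
  have -> : ((d - 1) * (d - 1) = (d - 2) * d + 1)%N by nia.
  by rewrite modnMDl modn_small.
have tn_div := divn_eq (t * n) d; rewrite htn in tn_div.
have -> : (t * n - 1 = (t * n) %/ d * d)%N by rewrite {1}tn_div addnK.
rewrite mulnK; last exact: leq_trans hd.
by rewrite {1}tn_div addn1 mulnC.
Qed.

Theorem theorem2p1 (d n t : nat) :
  (2 <= d)%N -> (0 < n)%N -> (t = 1 \/ t = d - 1)%N -> n = t %[mod d] ->
  let m := ((t * n - 1) %/ d)%N in
  let a := fa in let b := fb in let c := fc in let q := fq in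
  let qd := q ^+ d in
  let Q := q ^+ (t * n) in
  cong3
    (\sum_(0 <= k < m.+1)
       qpoch (a * q) qd k * qpoch (q / a) qd k * qpoch (q / b) qd k
       / (qpoch qd qd k * qpoch c qd k * qpoch (q ^+ (d + 3) / (b * c)) qd k)
       * qd ^+ k)
    ((1 - a * Q) * (a - Q) / ((a - b) * (1 - a * b))
       * (qpoch (c / (a * q)) qd m * qpoch (a * c / q) qd m
          / (qpoch c qd m * qpoch (c / q ^+ 2) qd m))
     + (b - Q) * (a * b - 1 - a ^+ 2 + a * Q) / ((a - b) * (1 - a * b))
       * ((q / b) ^+ m * qpoch (b * c / q) qd m * qpoch (q ^+ (d + 2) / c) qd m
          / (qpoch c qd m * qpoch (q ^+ (d + 3) / (b * c)) qd m)))
    (1 - Xa * Xq ^+ (t * n)) (Xa - Xq ^+ (t * n)) (Xb - Xq ^+ (t * n)).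
Proof.
move=> hd _ ht hmod m a b c q qd Q.
have d_gt0 : (0 < d)%N by apply: ltnW.
exact: (congruence _ _ _ d_gt0 (tn_eq _ _ _ hd ht hmod)).
Qed.
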